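(* In the setting of the context, under (A1) and (A2), the piecewise constant discrete derivatives $\tilde w^n_x=(\tilde v^n_x,\tilde u^n_x)$ satisfy $$\|w^n_x-\tilde w^n_x\|_{L^2}=O(\varepsilon^2\Delta x),$$ where $w^n_x=(v_x(\cdot,t^n),u_x(\cdot,t^n))$ is the exact derivative.
   Context: $\Omega=[0,1]$; $(v,u)$ solves $v_t-u_x=0$, $u_t-\varepsilon^{-2}v_x=g$ on $\Omega\times\mathbb{R}^+$ with $v=0$ on $\partial\Omega$, $0<\varepsilon<1$. Uniform mesh $\Omega_i=[x_i,x_{i+1}]$, $i=1,\dots,N_x$, width $\Delta x$, midpoints $\bar x_i$; $t^n=n\Delta t$; $v_i^n=v(\bar x_i,t^n)$, $u_i^n=u(\bar x_i,t^n)$. On $\Omega_i$: $\tilde v^n_x=\frac1{2\Delta x}\big(v^n_{i+1}-v^n_{i-1}+\frac{\Delta x}{\Delta t}(u^n_{i+1}+u^n_{i-1}-2u^n_i)\big)$, $\tilde u^n_x=\frac1{2\Delta x}\big(u^n_{i+1}-u^n_{i-1}+\frac{\Delta x}{\Delta t}(v^n_{i+1}+v^n_{i-1}-2v^n_i)\big)$. (A1) $u,v$ sufficiently smooth with $v=\varepsilon^2v^{(2)}+O(\varepsilon^3)$, $u_x=\varepsilon^2u^{(2)}_x+O(\varepsilon^3)$ in the norm $\|\varphi\|_{C^1}=\|\varphi\|_\infty+\|\nabla_{x,t}\varphi\|_\infty$, with $\varepsilon$-independent smooth $v^{(2)},u^{(2)}$. (A2) $\Delta t=\widehat{\mathrm{CFL}}\,\Delta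 x$ with fixed $0<\widehat{\mathrm{CFL}}<1$. $O(\cdot)$: bounded by a constant independent of $\varepsilon,\Delta t,\Delta x$ times the expression. *)

From Stdlib Require Import Reals Lra Lia.
From Coquelicot Require Import Coquelicot.
Open Scope R_scope.

Definition dx_ (f : R -> R -> R) (x t : R) : R := Derive (fun y => f y t) x.
Definition dt_ (f : R -> R -> R) (x t : R) : R := Derive (fun s => f x s) t.

Definition in_dom (x t : R) : Prop := 0 <= x <= 1 /\ 0 <= t.

(* phi has C^1 size at most B on Omega x R^+ (sup of |phi|, |phi_x|, |phi_t|).
   This is equivalent, up to a fixed factor, to ||phi||_{C^1} <= B. *)
Definition C1_le (phi : R -> R -> R) (B : R) : Prop :=
  forall x t, in_dom x t ->
    Rabs (phi x t) <= B /\ Rabs (dx_ phi x t) <= B /\ Rabs (dt_ phi x t) <= B.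

(* Uniform mesh of [0,1] with N cells: Omega_i = [x_i, x_{i+1}], i = 1..N,
   x_i = (i-1) dx, midpoint xbar_i = (i - 1/2) dx. *)
Definition node (dx : R) (i : nat) : R := (INR i - 1) * dx.
Definition mid (dx : R) (i : nat) : R := (INR i - / 2) * dx.

(* Cell values f_i = f(xbar_i), i = 1..N, with ghost values at i = 0 and
   i = N+1 obtained by reflection with sign s (s = -1 for v, odd reflection
   compatible with v = 0 on the boundary; s = 1 for u, even reflection). *)
Definition cellval (s : R) (f : R -> R) (N : nat) (dx : R) (i : nat) : R :=
  if Nat.eqb i 0 then s * f (mid dx 1)
  else if Nat.eqb i (S N) then s * f (mid dx N)
  else f (mid dx i).

Definition dtilde (a b : nat -> R) (dx dt : R) (i : nat) : R :=
  / (2 * dx) * (a (S i) - a (i - 1)%nat + dx / dt * (b (S i) + b (i - 1)%nat - 2 * b i)).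

Fixpoint sum1 (F : nat -> R) (n : nat) : R :=
  match n with
  | O => 0
  | S m => sum1 F m + F (S m)
  end.

Definition L2err (v u : R -> R -> R) (N : nat) (dx dt tn : R) : R :=
  let V := cellval (-1) (fun x => v x tn) N dx in
  let U := cellval 1 (fun x => u x tn) N dx in
  sqrt (sum1 (fun i =>
    RInt (fun x => (dx_ v x tn - dtilde V U dx dt i) ^ 2
                 + (dx_ u x tn - dtilde U V dx dt i) ^ 2)
         (node dx i) (node dx (S i))) N).

(* On a cell of width h the stencil differs from the exact derivatives only through
   second-order Taylor remainders, so the pointwise error is O(K h), K being a common
   Lipschitz constant of v_x and u_x on [0,1].  At the two boundary cells the odd and even
   ghost values are consistent because v = 0 and u_x = v_t = 0 on the wall.  Under (A1),
   u_xx and u_xt are O(eps^2), and the PDE gives v_x = eps^2 (u_t - g), so K = O(eps^2);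
   squaring and summing the pointwise bound over the N cells gives the L^2 estimate. *)

From Stdlib Require Import Reals Lra Lia.
From Coquelicot Require Import Coquelicot.
Open Scope R_scope.

Definition lipschitz01 (f : R -> R) (K : R) : Prop :=
  forall p q, 0 <= p <= 1 -> 0 <= q <= 1 -> Rabs (f p - f q) <= K * Rabs (p - q).

Lemma lipschitz01_le (f : R -> R) (K K' : R) :
  lipschitz01 f K -> K <= K' -> lipschitz01 f K'.
Proof.
  intros Hf HK p q Hp Hq. apply (Rle_trans _ _ _ (Hf p q Hp Hq)).
  apply Rmult_le_compat_r; [apply Rabs_pos | exact HK].
Qed.

Lemma mean_value (f : R -> R) (a b : R) :
  (forall x, ex_derive f x) ->
  exists c, Rmin a b <= c <= Rmax a b /\ f b - f a = Derive f c * (b - a).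
Proof.
  intros Hd. apply (MVT_gen f a b (Derive f)).
  - intros x _. apply Derive_correct, Hd.
  - intros x _. apply continuity_pt_filterlim.
    apply (ex_derive_continuous (K := R_AbsRing) (V := R_NormedModule)), Hd.
Qed.

Lemma mean_value_bound (f : R -> R) (a b B : R) :
  (forall x, ex_derive f x) ->
  (forall c, Rmin a b <= c <= Rmax a b -> Rabs (Derive f c) <= B) ->
  Rabs (f b - f a) <= B * Rabs (b - a).
Proof.
  intros Hd HB. destruct (mean_value f a b Hd) as [c [Hc ->]].
  rewrite Rabs_mult. apply Rmult_le_compat_r; [apply Rabs_pos | exact (HB c Hc)].
Qed.

Lemma lipschitz01_of_Derive_bound (f : R -> R) (B : R) :
  (forall x, ex_derive f x) -> (forall c, 0 <= c <= 1 -> Rabs (Derive f c) <= B) ->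
  lipschitz01 f B.
Proof.
  intros Hd HB p q Hp Hq. apply (mean_value_bound f q p B Hd).
  intros c Hc. apply HB. unfold Rmin, Rmax in Hc. destruct (Rle_dec q p); lra.
Qed.

Lemma taylor_near (f : R -> R) (K h a b c : R) :
  (forall x, ex_derive f x) -> lipschitz01 (Derive f) K -> 0 <= K ->
  0 <= a <= 1 -> 0 <= b <= 1 -> 0 <= c <= 1 ->
  Rabs (a - c) <= 2 * h -> Rabs (b - c) <= 2 * h ->
  Rabs (f b - f a - Derive f c * (b - a)) <= 8 * K * h ^ 2.
Proof.
  intros Hd Hlip HK Ha Hb Hc Hac Hbc.
  destruct (mean_value f a b Hd) as [y [Hy ->]].
  apply Rabs_le_between in Hac, Hbc.
  assert (Hy01 : 0 <= y <= 1 /\ Rabs (y - c) <= 2 * h).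
  { unfold Rmin, Rmax in Hy. split; [|apply Rabs_le]; destruct (Rle_dec a b); lra. }
  assert (Hba : Rabs (b - a) <= 4 * h) by (apply Rabs_le; lra).
  assert (Hyc : Rabs (Derive f y - Derive f c) <= K * (2 * h)).
  { apply (Rle_trans _ _ _ (Hlip y c (proj1 Hy01) Hc)).
    apply Rmult_le_compat_l; [exact HK | apply Hy01]. }
  replace (Derive f y * (b - a) - Derive f c * (b - a))
    with ((Derive f y - Derive f c) * (b - a)) by ring.
  rewrite Rabs_mult.
  apply Rle_trans with (K * (2 * h) * (4 * h)); [|right; ring].
  apply Rmult_le_compat; auto using Rabs_pos.
Qed.

Lemma Rabs_derive_sub_le (f g : R -> R) (t a b K : R) :
  is_derive f t a -> is_derive g t b ->
  (forall h, 0 < h -> Rabs ((f (t + h) - f t) - (g (t + h) - g t)) <= K * h) ->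
  Rabs (a - b) <= K.
Proof.
  intros Hf Hg Hinc. apply Rnot_lt_le. intros Hlt.
  set (eps := (Rabs (a - b) - K) / 3).
  assert (Heps : 0 < eps) by (unfold eps; lra).
  apply is_derive_Reals in Hf, Hg.
  destruct (Hf eps Heps) as [d1 Hd1]. destruct (Hg eps Heps) as [d2 Hd2].
  pose proof (cond_pos d1). pose proof (cond_pos d2).
  set (h := Rmin d1 d2 / 2).
  assert (Hh : 0 < h /\ Rabs h < d1 /\ Rabs h < d2).
  { unfold h, Rmin. destruct (Rle_dec d1 d2); rewrite Rabs_pos_eq; lra. }
  destruct Hh as (Hh & Hh1 & Hh2).
  specialize (Hd1 h ltac:(lra) Hh1). specialize (Hd2 h ltac:(lra) Hh2).
  specialize (Hinc h Hh).
  set (qf := (f (t + h) - f t) / h) in *. set (qg := (g (t + h) - g t) / h) in *.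
  assert (Hq : Rabs (qf - qg) <= K).
  { replace (f (t + h) - f t - (g (t + h) - g t)) with (h * (qf - qg)) in Hinc
      by (unfold qf, qg; field; lra).
    rewrite Rabs_mult, (Rabs_pos_eq h) in Hinc by lra.
    apply (Rmult_le_reg_l h); lra. }
  apply Rabs_def2 in Hd1, Hd2. apply Rabs_le_between in Hq.
  unfold eps in *.
  destruct (Rcase_abs (a - b)) as [Hs | Hs];
    [rewrite Rabs_left in * by exact Hs | rewrite Rabs_right in * by exact Hs]; lra.
Qed.

Lemma Derive_zero_of_vanishing (f : R -> R) (t : R) :
  0 <= t -> (forall s, 0 <= s -> f s = 0) -> ex_derive f t -> Derive f t = 0.
Proof.
  intros Ht Hf Hd.
  assert (H : Rabs (Derive f t - 0) <= 0).
  { apply (Rabs_derive_sub_le f (fun _ => 0) t);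
      [apply Derive_correct, Hd | apply (is_derive_const 0) |].
    intros h Hh. rewrite !Hf by lra. rewrite !Rminus_0_r, Rabs_R0. lra. }
  rewrite Rminus_0_r in H. pose proof (Rabs_pos (Derive f t)).
  apply Rabs_eq_0. lra.
Qed.

(* Only [w_xt] is assumed to exist, so instead of swapping the mixed derivatives we bound
   the x-variation of forward time increments and pass to the limit. *)
Lemma dt_lipschitz (w : R -> R -> R) (B t : R) :
  (forall z s, ex_derive (fun y => w y s) z) ->
  (forall z s, ex_derive (fun s => w z s) s) ->
  (forall z s, ex_derive (fun s => dx_ w z s) s) ->
  (forall z s, 0 <= z <= 1 -> 0 <= s -> Rabs (dt_ (dx_ w) z s) <= B) ->
  0 <= t -> lipschitz01 (fun x => dt_ w x t) B.
Proof.
  intros Hwx Hwt Hwxt HB Ht p q Hp Hq.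
  apply (Rabs_derive_sub_le (fun s => w p s) (fun s => w q s) t);
    [apply Derive_correct, Hwt | apply Derive_correct, Hwt |].
  intros h Hh.
  replace (B * Rabs (p - q) * h) with (B * h * Rabs (p - q)) by ring.
  apply (mean_value_bound (fun z => w z (t + h) - w z t)).
  { intros z. apply (ex_derive_minus (fun z => w z (t + h)) (fun z => w z t)); auto. }
  intros c Hc. rewrite Derive_minus by auto.
  apply Rle_trans with (B * Rabs (t + h - t)); [| right; f_equal; rewrite Rabs_pos_eq; lra].
  apply (mean_value_bound (fun s => dx_ w c s)); [auto |].
  intros s Hs. apply HB.
  - unfold Rmin, Rmax in Hc. destruct (Rle_dec q p); lra.
  - unfold Rmin in Hs. destruct (Rle_dec t (t + h)); lra.
Qed.

Lemma Rabs_Derive_le_of_expansion (f1 f2 : R -> R) (c e C M : R) :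
  ex_derive f1 c -> ex_derive f2 c -> 0 < e < 1 ->
  Rabs (Derive (fun y => f1 y - e ^ 2 * f2 y) c) <= C * e ^ 3 ->
  Rabs (Derive f2 c) <= M ->
  Rabs (Derive f1 c) <= e ^ 2 * (Rabs C + Rabs M).
Proof.
  intros H1 H2 He HC HM.
  rewrite Derive_minus, Derive_scal in HC by auto using ex_derive_scal.
  assert (He2 : 0 < e ^ 2 <= 1) by (simpl; split; nra).
  assert (HCe : C * e ^ 3 <= Rabs C * e ^ 2).
  { replace (C * e ^ 3) with (C * e * e ^ 2) by ring.
    apply Rmult_le_compat_r; [lra |].
    pose proof (Rle_abs C); pose proof (Rabs_pos C); nra. }
  pose proof (Rabs_triang (Derive f1 c - e ^ 2 * Derive f2 c) (e ^ 2 * Derive f2 c)) as T.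
  replace (Derive f1 c - e ^ 2 * Derive f2 c + e ^ 2 * Derive f2 c) with (Derive f1 c) in T
    by ring.
  rewrite Rabs_mult, (Rabs_pos_eq (e ^ 2)) in T by lra.
  pose proof (Rle_abs M). nra.
Qed.

Lemma dx_lipschitz_of_expansion (w w2 : R -> R -> R) (e C M t : R) :
  0 < e < 1 -> 0 <= t ->
  (forall x, ex_derive (fun y => dx_ w y t) x) ->
  (forall x, ex_derive (fun y => dx_ w2 y t) x) ->
  C1_le (fun x t => dx_ w x t - e ^ 2 * dx_ w2 x t) (C * e ^ 3) -> C1_le (dx_ w2) M ->
  lipschitz01 (fun x => dx_ w x t) (e ^ 2 * (Rabs C + Rabs M)).
Proof.
  intros He Ht Hw Hw2 HC HM.
  apply lipschitz01_of_Derive_bound; [exact Hw |].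
  intros c Hc. apply Rabs_Derive_le_of_expansion with (f2 := fun y => dx_ w2 y t); auto.
  - exact (proj1 (proj2 (HC c t (conj Hc Ht)))).
  - exact (proj1 (proj2 (HM c t (conj Hc Ht)))).
Qed.

Lemma dt_lipschitz_of_expansion (w w2 : R -> R -> R) (e C M t : R) :
  0 < e < 1 -> 0 <= t ->
  (forall z s, ex_derive (fun y => w y s) z) ->
  (forall z s, ex_derive (fun s => w z s) s) ->
  (forall z s, ex_derive (fun s => dx_ w z s) s) ->
  (forall z s, ex_derive (fun s => dx_ w2 z s) s) ->
  C1_le (fun x t => dx_ w x t - e ^ 2 * dx_ w2 x t) (C * e ^ 3) -> C1_le (dx_ w2) M ->
  lipschitz01 (fun x => dt_ w x t) (e ^ 2 * (Rabs C + Rabs M)).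
Proof.
  intros He Ht Hwx Hwt Hwxt Hw2 HC HM.
  apply dt_lipschitz; auto.
  intros z s Hz Hs.
  apply Rabs_Derive_le_of_expansion with (f2 := fun s => dx_ w2 z s); auto.
  - exact (proj2 (proj2 (HC z s (conj Hz Hs)))).
  - exact (proj2 (proj2 (HM z s (conj Hz Hs)))).
Qed.

(* Through the PDE, [v_x = e^2 (u_t - g)]: this is why no bound on [v^(2)] is needed. *)
Lemma dx_lipschitz_of_pde (v u g : R -> R -> R) (e t B L : R) :
  0 < e < 1 ->
  (forall x, 0 <= x <= 1 -> dt_ u x t - / e ^ 2 * dx_ v x t = g x t) ->
  lipschitz01 (fun x => dt_ u x t) B ->
  (forall x y, 0 <= x <= 1 -> 0 <= y <= 1 -> Rabs (g x t - g y t) <= L * Rabs (x - y)) ->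
  lipschitz01 (fun x => dx_ v x t) (e ^ 2 * (B + Rabs L)).
Proof.
  intros He Hpde Hu Hg p q Hp Hq.
  assert (He2 : 0 < e ^ 2) by (simpl; nra).
  assert (Hvx : forall x, 0 <= x <= 1 -> dx_ v x t = e ^ 2 * (dt_ u x t - g x t)).
  { intros x Hx. rewrite <- (Hpde x Hx). field. lra. }
  rewrite (Hvx p Hp), (Hvx q Hq).
  replace (e ^ 2 * (dt_ u p t - g p t) - e ^ 2 * (dt_ u q t - g q t))
    with (e ^ 2 * ((dt_ u p t - dt_ u q t) - (g p t - g q t))) by ring.
  rewrite Rabs_mult, (Rabs_pos_eq (e ^ 2)), Rmult_assoc by lra.
  apply Rmult_le_compat_l; [lra |].
  pose proof (Hu p q Hp Hq). pose proof (Hg p q Hp Hq).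
  set (X := dt_ u p t - dt_ u q t) in *. set (Y := g p t - g q t) in *.
  pose proof (Rabs_triang X (- Y)) as T. rewrite Rabs_Ropp in T.
  unfold Rminus at 1.
  pose proof (Rle_abs L). pose proof (Rabs_pos (p - q)). nra.
Qed.

Lemma wall_traces (v u : R -> R -> R) (t : R) :
  0 <= t -> (forall s, 0 <= s -> v 0 s = 0 /\ v 1 s = 0) ->
  (forall x, ex_derive (fun s => v x s) t) ->
  (forall x, 0 <= x <= 1 -> dt_ v x t - dx_ u x t = 0) ->
  v 0 t = 0 /\ v 1 t = 0 /\ dx_ u 0 t = 0 /\ dx_ u 1 t = 0.
Proof.
  intros Ht Hv Hd Hpde.
  assert (Hvt0 : dt_ v 0 t = 0)
    by (apply Derive_zero_of_vanishing; [exact Ht | apply Hv | apply Hd]).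
  assert (Hvt1 : dt_ v 1 t = 0)
    by (apply Derive_zero_of_vanishing; [exact Ht | apply Hv | apply Hd]).
  pose proof (Hpde 0 ltac:(lra)). pose proof (Hpde 1 ltac:(lra)).
  destruct (Hv t Ht). repeat split; lra.
Qed.

(* [aL, aC, aR] and [bL, bC, bR]: values of the two components on cells i-1, i, i+1;
   [dF, dU]: their exact derivatives at a point of cell i. *)
Definition stencil_residuals_le (K h dF dU aL aC aR bL bC bR : R) : Prop :=
  Rabs (aR - aL - 2 * h * dF) <= 24 * K * h ^ 2 /\
  Rabs (aR + aL - 2 * aC) <= 32 * K * h ^ 2 /\
  Rabs (bR - bL - 2 * h * dU) <= 24 * K * h ^ 2 /\
  Rabs (bR + bL - 2 * bC) <= 32 * K * h ^ 2.

Lemma dtilde_error (a b : nat -> R) (K h CFL d : R) (i : nat) :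
  0 < h -> 0 < CFL -> 0 <= K ->
  Rabs (a (S i) - a (i - 1)%nat - 2 * h * d) <= 24 * K * h ^ 2 ->
  Rabs (b (S i) + b (i - 1)%nat - 2 * b i) <= 32 * K * h ^ 2 ->
  Rabs (d - dtilde a b h (CFL * h) i) <= (12 + 16 / CFL) * K * h.
Proof.
  intros Hh HCFL HK HA HD. unfold dtilde.
  set (A := a (S i) - a (i - 1)%nat - 2 * h * d) in HA.
  set (D := b (S i) + b (i - 1)%nat - 2 * b i) in HD |- *.
  replace (d - / (2 * h) * (a (S i) - a (i - 1)%nat + h / (CFL * h) * D))
    with (/ (2 * h) * (- A - / CFL * D)) by (unfold A; field; lra).
  rewrite Rabs_mult, Rabs_pos_eq by (apply Rlt_le, Rinv_0_lt_compat; lra).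
  apply Rabs_le_between in HA, HD.
  assert (Hi : 0 < / CFL) by (apply Rinv_0_lt_compat; lra).
  assert (HB : Rabs (- A - / CFL * D) <= 24 * K * h ^ 2 + / CFL * (32 * K * h ^ 2))
    by (apply Rabs_le; nra).
  apply (Rmult_le_reg_l (2 * h)); [lra |].
  rewrite <- Rmult_assoc, Rinv_r, Rmult_1_l by lra.
  unfold Rdiv. nra.
Qed.

Lemma cellval_in (s : R) (f : R -> R) (N : nat) (h : R) (j : nat) :
  (1 <= j <= N)%nat -> cellval s f N h j = f (mid h j).
Proof.
  intros Hj. unfold cellval.
  destruct (Nat.eqb_spec j 0); [lia |]. destruct (Nat.eqb_spec j (S N)); [lia | easy].
Qed.

Lemma cellval_0 (s : R) (f : R -> R) (N : nat) (h : R) :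
  cellval s f N h 0 = s * f (mid h 1).
Proof. reflexivity. Qed.

Lemma cellval_last (s : R) (f : R -> R) (N : nat) (h : R) :
  cellval s f N h (S N) = s * f (mid h N).
Proof. unfold cellval. simpl. now rewrite Nat.eqb_refl. Qed.

Section Stencil.

Variables (F U : R -> R) (K : R).
Hypotheses (HdF : forall x, ex_derive F x) (HdU : forall x, ex_derive U x) (HK : 0 <= K).
Hypotheses (HlipF : lipschitz01 (Derive F) K) (HlipU : lipschitz01 (Derive U) K).
Hypotheses (HF0 : F 0 = 0) (HF1 : F 1 = 0) (HU0 : Derive U 0 = 0) (HU1 : Derive U 1 = 0).

Local Ltac taylor Hd Hlip h a b c :=
  let T := fresh "T" in
  pose proof (taylor_near _ K h a b c Hd Hlip HK ltac:(lra) ltac:(lra) ltac:(lra)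
    ltac:(apply Rabs_le; lra) ltac:(apply Rabs_le; lra)) as T;
  apply Rabs_le_between in T.

Lemma stencil_interior (h p x : R) :
  0 < h -> h <= p -> p + 2 * h <= 1 -> p <= x <= p + h ->
  stencil_residuals_le K h (Derive F x) (Derive U x)
    (F (p - h / 2)) (F (p + h / 2)) (F (p + 3 * h / 2))
    (U (p - h / 2)) (U (p + h / 2)) (U (p + 3 * h / 2)).
Proof.
  intros Hh Hp0 Hp1 Hx.
  taylor HdF HlipF h (p - h / 2) (p + 3 * h / 2) x.
  taylor HdF HlipF h (p + h / 2) (p + 3 * h / 2) (p + h / 2).
  taylor HdF HlipF h (p - h / 2) (p + h / 2) (p + h / 2).
  taylor HdU HlipU h (p - h / 2) (p + 3 * h / 2) x.
  taylor HdU HlipU h (p + h / 2) (p + 3 * h / 2) (p + h / 2).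
  taylor HdU HlipU h (p - h / 2) (p + h / 2) (p + h / 2).
  repeat split; apply Rabs_le; nra.
Qed.

(* The ghost values reflect [F] oddly and [U] evenly, matching [F = 0] and [U' = 0] at the wall. *)
Lemma stencil_left (h x : R) :
  0 < h -> 2 * h <= 1 -> 0 <= x <= h ->
  stencil_residuals_le K h (Derive F x) (Derive U x)
    (-1 * F (h / 2)) (F (h / 2)) (F (3 * h / 2))
    (1 * U (h / 2)) (U (h / 2)) (U (3 * h / 2)).
Proof.
  intros Hh Hh1 Hx.
  taylor HdF HlipF h 0 (h / 2) x. taylor HdF HlipF h 0 (3 * h / 2) x.
  taylor HdU HlipU h (h / 2) (3 * h / 2) 0. taylor HdU HlipU h (h / 2) (3 * h / 2) x.
  pose proof (HlipU x 0 ltac:(lra) ltac:(lra)) as LU.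
  rewrite HU0, Rminus_0_r, Rminus_0_r, (Rabs_pos_eq x) in LU by lra.
  rewrite HF0, HU0 in *. apply Rabs_le_between in LU.
  repeat split; apply Rabs_le; nra.
Qed.

Lemma stencil_right (h x : R) :
  0 < h -> 2 * h <= 1 -> 1 - h <= x <= 1 ->
  stencil_residuals_le K h (Derive F x) (Derive U x)
    (F (1 - 3 * h / 2)) (F (1 - h / 2)) (-1 * F (1 - h / 2))
    (U (1 - 3 * h / 2)) (U (1 - h / 2)) (1 * U (1 - h / 2)).
Proof.
  intros Hh Hh1 Hx.
  taylor HdF HlipF h (1 - 3 * h / 2) 1 x. taylor HdF HlipF h (1 - h / 2) 1 x.
  taylor HdU HlipU h (1 - 3 * h / 2) (1 - h / 2) 1.
  taylor HdU HlipU h (1 - 3 * h / 2) (1 - h / 2) x.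
  pose proof (HlipU x 1 ltac:(lra) ltac:(lra)) as LU.
  rewrite HU1, Rminus_0_r, (Rabs_left1 (x - 1)) in LU by lra.
  rewrite HF1, HU1 in *. apply Rabs_le_between in LU.
  repeat split; apply Rabs_le; nra.
Qed.

Lemma stencil_single (x : R) :
  0 <= x <= 1 ->
  stencil_residuals_le K 1 (Derive F x) (Derive U x)
    (-1 * F (1 / 2)) (F (1 / 2)) (-1 * F (1 / 2))
    (1 * U (1 / 2)) (U (1 / 2)) (1 * U (1 / 2)).
Proof.
  intros Hx.
  taylor HdF HlipF 1 0 1 x. taylor HdF HlipF 1 0 (1 / 2) x. taylor HdF HlipF 1 1 (1 / 2) x.
  pose proof (HlipU x 0 ltac:(lra) ltac:(lra)) as LU.
  rewrite HU0, Rminus_0_r, Rminus_0_r, (Rabs_pos_eq x) in LU by lra.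
  rewrite HF0, HF1 in *. apply Rabs_le_between in LU.
  repeat split; apply Rabs_le; nra.
Qed.

Lemma stencil_residuals_cell (N i : nat) (x : R) :
  (1 <= i <= N)%nat -> let h := / INR N in node h i <= x <= node h (S i) ->
  stencil_residuals_le K h (Derive F x) (Derive U x)
    (cellval (-1) F N h (i - 1)) (cellval (-1) F N h i) (cellval (-1) F N h (S i))
    (cellval 1 U N h (i - 1)) (cellval 1 U N h i) (cellval 1 U N h (S i)).
Proof.
  intros Hi h Hx.
  assert (HN : 0 < INR N) by (apply lt_0_INR; lia).
  assert (Hh : 0 < h) by (apply Rinv_0_lt_compat, HN).
  assert (HNh : INR N * h = 1) by (unfold h; field; lra).
  unfold node in Hx. rewrite S_INR in Hx.
  destruct (Nat.eq_dec i 1) as [Ei1 | Hi1]; destruct (Nat.eq_dec i N) as [EiN | HiN].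
  - subst i N. assert (h1 : h = 1) by (unfold h; simpl; apply Rinv_1).
    simpl (1 - 1)%nat. rewrite !cellval_0, !cellval_last, !cellval_in by lia.
    replace (mid h 1) with (1 / 2) by (unfold mid; rewrite h1; simpl; field).
    rewrite h1. apply stencil_single. simpl in Hx. lra.
  - subst i. assert (H2 : 2 <= INR N) by (apply (le_INR 2); lia).
    simpl (1 - 1)%nat. rewrite !cellval_0, !cellval_in by lia.
    replace (mid h 1) with (h / 2) by (unfold mid; simpl; field).
    replace (mid h 2) with (3 * h / 2) by (unfold mid; simpl; field).
    apply stencil_left; simpl in Hx; nra.
  - subst i. assert (H2 : 2 <= INR N) by (apply (le_INR 2); lia).
    rewrite !cellval_last, !cellval_in by lia.
    replace (mid h (N - 1)) with (1 - 3 * h / 2)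
      by (unfold mid, h; rewrite minus_INR by lia; simpl; field; lra).
    replace (mid h N) with (1 - h / 2) by (unfold mid, h; field; lra).
    apply stencil_right; nra.
  - assert (H2 : 2 <= INR i) by (apply (le_INR 2); lia).
    assert (H3 : INR i + 1 <= INR N) by (rewrite <- S_INR; apply le_INR; lia).
    rewrite !cellval_in by lia.
    replace (mid h (i - 1)) with ((INR i - 1) * h - h / 2)
      by (unfold mid; rewrite minus_INR by lia; simpl; field).
    replace (mid h i) with ((INR i - 1) * h + h / 2) by (unfold mid; field).
    replace (mid h (S i)) with ((INR i - 1) * h + 3 * h / 2)
      by (unfold mid; rewrite S_INR; field).
    apply stencil_interior; nra.
Qed.

Lemma cell_error (CFL : R) (N i : nat) (x : R) :
  0 < CFL -> (1 <= i <= N)%nat -> let h := / INR N in node h i <= x <= node h (S i) ->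
  Rabs (Derive F x - dtilde (cellval (-1) F N h) (cellval 1 U N h) h (CFL * h) i)
    <= (12 + 16 / CFL) * K * h /\
  Rabs (Derive U x - dtilde (cellval 1 U N h) (cellval (-1) F N h) h (CFL * h) i)
    <= (12 + 16 / CFL) * K * h.
Proof.
  intros HCFL Hi h Hx.
  assert (Hh : 0 < h) by (apply Rinv_0_lt_compat, lt_0_INR; lia).
  destruct (stencil_residuals_cell N i x Hi Hx) as (HaF & HsF & HaU & HsU).
  split; apply dtilde_error; assumption.
Qed.

End Stencil.

Lemma sum1_le_const (G : nat -> R) (n : nat) (c : R) :
  (forall i, (1 <= i <= n)%nat -> G i <= c) -> sum1 G n <= INR n * c.
Proof.
  induction n as [| n IH]; intros HG; simpl sum1.
  - simpl. lra.
  - rewrite S_INR.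
    assert (sum1 G n <= INR n * c) by (apply IH; intros i Hi; apply HG; lia).
    assert (G (S n) <= c) by (apply HG; lia).
    lra.
Qed.

Lemma L2err_le (v u : R -> R -> R) (t K CFL : R) (N : nat) :
  (0 < N)%nat -> 0 < CFL -> 0 <= K ->
  (forall x, ex_derive (fun y => v y t) x) -> (forall x, ex_derive (fun y => u y t) x) ->
  (forall x, ex_derive (fun y => dx_ v y t) x) -> (forall x, ex_derive (fun y => dx_ u y t) x) ->
  lipschitz01 (fun x => dx_ v x t) K -> lipschitz01 (fun x => dx_ u x t) K ->
  v 0 t = 0 -> v 1 t = 0 -> dx_ u 0 t = 0 -> dx_ u 1 t = 0 ->
  L2err v u N (/ INR N) (CFL * / INR N) t <= 2 * (12 + 16 / CFL) * K * / INR N.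
Proof.
  intros HN HCFL HK Hv Hu Hvx Hux Hlv Hlu Hv0 Hv1 Hu0 Hu1.
  set (h := / INR N).
  assert (HNh : INR N * h = 1) by (unfold h; field; apply not_0_INR; lia).
  assert (Hh : 0 < h) by (apply Rinv_0_lt_compat, lt_0_INR; lia).
  set (B := (12 + 16 / CFL) * K * h).
  assert (HB : 0 <= B).
  { assert (0 < 16 / CFL) by (apply Rdiv_lt_0_compat; lra).
    unfold B. apply Rmult_le_pos; [apply Rmult_le_pos |]; lra. }
  unfold L2err. cbv zeta.
  apply Rle_trans with (sqrt ((2 * B) ^ 2)); [| rewrite sqrt_pow2 by lra; unfold B; right; ring].
  apply sqrt_le_1_alt.
  apply Rle_trans with (INR N * (h * (2 * B ^ 2))); [| rewrite <- Rmult_assoc, HNh; nra].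
  apply sum1_le_const. intros i Hi.
  apply (Rle_trans _ _ _ (Rle_abs _)).
  assert (Hcell : node h (S i) - node h i = h) by (unfold node; rewrite S_INR; ring).
  apply Rle_trans with ((node h (S i) - node h i) * (2 * B ^ 2)); [| rewrite Hcell; lra].
  apply abs_RInt_le_const; [lra | |].
  - apply (ex_RInt_continuous (V := R_CompleteNormedModule)). intros z _.
    apply (ex_derive_continuous (K := R_AbsRing) (V := R_NormedModule)).
    auto_derive. auto.
  - intros x Hx.
    destruct (cell_error (fun y => v y t) (fun y => u y t) K Hv Hu HK Hlv Hlu Hv0 Hv1 Hu0 Hu1
                CFL N i x HCFL Hi Hx) as [E1 E2].
    apply Rabs_le_between in E1, E2.
    rewrite Rabs_pos_eq by (apply Rplus_le_le_0_compat; apply pow2_ge_0).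
    fold h B in E1, E2. unfold dx_. nra.
Qed.

Theorem lemma5
  (CFL : R) (g : R -> R -> R)
  (v u : R -> R -> R -> R)   (* families indexed by epsilon: v eps x t *)
  (v2 u2 : R -> R -> R) :
  0 < CFL < 1 ->
  (forall e x t,
     ex_derive (fun y => v e y t) x /\ ex_derive (fun s => v e x s) t /\
     ex_derive (fun y => dx_ (v e) y t) x /\
     ex_derive (fun y => u e y t) x /\ ex_derive (fun s => u e x s) t /\
     ex_derive (fun y => dx_ (u e) y t) x /\ ex_derive (fun s => dx_ (u e) x s) t) ->
  (forall x t,
     ex_derive (fun y => v2 y t) x /\ ex_derive (fun s => v2 x s) t /\
     ex_derive (fun y => u2 y t) x /\
     ex_derive (fun y => dx_ u2 y t) x /\ ex_derive (fun s => dx_ u2 x s) t) ->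
  (exists M, C1_le v2 M /\ C1_le (dx_ u2) M) ->
  (exists L, forall x y t, 0 <= x <= 1 -> 0 <= y <= 1 -> 0 <= t ->
     Rabs (g x t - g y t) <= L * Rabs (x - y)) ->
  (forall e, 0 < e < 1 -> forall x t, in_dom x t ->
     dt_ (v e) x t - dx_ (u e) x t = 0 /\
     dt_ (u e) x t - / (e ^ 2) * dx_ (v e) x t = g x t) ->
  (forall e, 0 < e < 1 -> forall t, 0 <= t -> v e 0 t = 0 /\ v e 1 t = 0) ->
  (exists C, forall e, 0 < e < 1 ->
     C1_le (fun x t => v e x t - e ^ 2 * v2 x t) (C * e ^ 3) /\
     C1_le (fun x t => dx_ (u e) x t - e ^ 2 * dx_ u2 x t) (C * e ^ 3)) ->
  exists K, forall e, 0 < e < 1 -> forall (N n : nat), (0 < N)%nat ->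
    let dx := / INR N in
    let dt := CFL * dx in
    L2err (v e) (u e) N dx dt (INR n * dt) <= K * e ^ 2 * dx.
Proof.
  intros HCFL Hsm Hsm2 [M [_ HM]] [L HL] Hpde Hbd [C HC].
  set (Kmax := Rabs C + Rabs M + Rabs L).
  exists (2 * (12 + 16 / CFL) * Kmax).
  intros e He N n HN dx dt.
  assert (Ht : 0 <= INR n * dt).
  { apply Rmult_le_pos; [apply pos_INR |].
    apply Rmult_le_pos; [lra | apply Rlt_le, Rinv_0_lt_compat, lt_0_INR; lia]. }
  set (t := INR n * dt) in *.
  destruct (HC e He) as [_ HCu].
  assert (Hux : lipschitz01 (fun x => dx_ (u e) x t) (e ^ 2 * (Rabs C + Rabs M))).
  { apply dx_lipschitz_of_expansion with u2; auto;
      intros x; pose proof (Hsm e x t); pose proof (Hsm2 x t); tauto. }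
  assert (Hut : lipschitz01 (fun x => dt_ (u e) x t) (e ^ 2 * (Rabs C + Rabs M))).
  { apply dt_lipschitz_of_expansion with u2; auto;
      intros z s; pose proof (Hsm e z s); pose proof (Hsm2 z s); tauto. }
  assert (Hvx := dx_lipschitz_of_pde (v e) (u e) g e t _ L He
                   (fun x Hx => proj2 (Hpde e He x t (conj Hx Ht))) Hut
                   (fun x y Hx Hy => HL x y t Hx Hy Ht)).
  destruct (wall_traces (v e) (u e) t Ht (Hbd e He)) as (Hv0 & Hv1 & Hu0 & Hu1).
  { intros x. pose proof (Hsm e x t). tauto. }
  { intros x Hx. exact (proj1 (Hpde e He x t (conj Hx Ht))). }
  assert (He2 : 0 < e ^ 2 <= 1) by (simpl; split; nra).
  pose proof (Rabs_pos C); pose proof (Rabs_pos M); pose proof (Rabs_pos L).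
  replace (2 * (12 + 16 / CFL) * Kmax * e ^ 2 * dx)
    with (2 * (12 + 16 / CFL) * (e ^ 2 * Kmax) * / INR N) by (unfold dx; ring).
  apply L2err_le; try assumption; try (intros x; pose proof (Hsm e x t); tauto).
  - lra.
  - unfold Kmax. nra.
  - apply (lipschitz01_le _ _ _ Hvx), Rmult_le_compat_l; [lra |]. unfold Kmax. nra.
  - apply (lipschitz01_le _ _ _ Hux), Rmult_le_compat_l; [lra |]. unfold Kmax. lra.
Qed.
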